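(* Let $k\ge 2$ and $n=2k+1$. If a connected graph $G$ has the same distance spectrum as the friendship graph $F^{k}_{n}$, then $\operatorname{diam}(G)=2$ and $|E(G)|=|E(F^{k}_{n})|=3k$.
   Context: For a connected graph $G$, the distance matrix $D(G)$ has as $(i,j)$-entry the distance between the $i$-th and $j$-th vertices; the distance spectrum consists of its eigenvalues. The friendship graph $F^{k}_{n}$ ($n=2k+1$) is obtained by taking $k$ copies of $C_3$ and identifying one vertex of each copy into a single common vertex. $\operatorname{diam}(G)$ is the maximum distance between two vertices of $G$. *)

From mathcomp Require Import all_boot all_order all_algebra.
Set Implicit Arguments. Unset Strict Implicit. Unset Printing Implicit Defensive.
Import GRing.Theory Num.Theory.

(* A simple graph on a finite vertex type T is a symmetric irreflexive
   relation e : rel T (the adjacency relation). *)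
Section Graphs.
Variable T : finType.
Variable e : rel T.

Definition ball (m : nat) (u : T) : {set T} :=
  iter m (fun S => S :|: [set y | [exists x in S, e x y]]) [set u].

(* graph distance: the least m with v in ball m u
   (equals #|T| if v is unreachable from u; irrelevant for connected graphs) *)
Definition gdist (u v : T) : nat :=
  find (fun m => v \in ball m u) (iota 0 #|T|).

Definition gconnected : Prop := forall u v : T, connect e u v.

Definition diam : nat := \max_(u : T) \max_(v : T) gdist u v.

Definition nedges : nat := #|[set A : {set T} | [exists x, exists y, e x y && (A == [set x; y])]]|.
End Graphs.

Definition distmx (n : nat) (e : rel 'I_n) : 'M[int]_n :=
  \matrix_(i < n, j < n) Posz (gdist e i j).

(* Friendship graph F^k_n, n = 2k+1, on 'I_(2k+1): vertex 0 is the common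
   vertex, and for i < k the triangle is {0, 2i+1, 2i+2}. *)
Definition friend_rel (k : nat) : rel 'I_(k.*2.+1) :=
  fun x y => (x != y) &&
    [|| (x == 0 :> nat), (y == 0 :> nat) | ((x : nat).-1./2 == (y : nat).-1./2)].
Arguments friend_rel k : clear implicits.

From mathcomp Require Import all_boot all_order all_algebra.
From mathcomp Require Import zify algC ring.
Set Implicit Arguments. Unset Strict Implicit. Unset Printing Implicit Defensive.
Import GRing.Theory Num.Theory Order.TTheory.

(* The least eigenvalue of the distance matrix of the friendship graph is at
   least -3 (an eigenvector is constant on the two outer vertices of each
   triangle unless the eigenvalue is -1, then constant on all outer vertices
   unless it is -3, and the remaining eigenvalues solve
   l (l + 3) = 2k (2l + 1), which has no root below -3).  A cospectral graph G
   therefore has Rayleigh quotients at least -3, whereas the induced path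
   a - b - c - d that exists as soon as diam G > 2 carries a vector of
   Rayleigh quotient below -3.  So diam G <= 2, and then
   D = 2J - 2I - A, so tr(D^2) = 4n^2 - 4n - 6|E| is a spectral invariant that
   determines |E|.  Finally diam G = 1 would make G complete, whose |E| differs
   from 3k when k >= 2. *)

Section Balls.
Variables (T : finType) (e : rel T).

Lemma in_ball0 u v : (v \in ball e 0 u) = (v == u).
Proof. by rewrite inE. Qed.

Lemma in_ballS m u v :
  (v \in ball e m.+1 u) = (v \in ball e m u) || [exists x in ball e m u, e x v].
Proof. by rewrite /ball iterS !inE. Qed.

Lemma in_ballSP m u v : v \in ball e m.+1 u ->
  v \in ball e m u \/ exists2 x, x \in ball e m u & e x v.
Proof.
by rewrite in_ballS => /orP[|/existsP[x /andP[]]]; [left | right; exists x].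
Qed.

Lemma ball_edge m u x y : x \in ball e m u -> e x y -> y \in ball e m.+1 u.
Proof.
by move=> xu exy; rewrite in_ballS; apply/orP; right; apply/existsP; exists x; rewrite xu.
Qed.

Lemma sub_ball m m' u : m <= m' -> {subset ball e m u <= ball e m' u}.
Proof.
move=> /subnK <- v; elim: (m' - m) => [//|j IHj] vu.
by rewrite addSn in_ballS IHj.
Qed.

Lemma ball_add i j u v w :
  v \in ball e i u -> w \in ball e j v -> w \in ball e (i + j) u.
Proof.
move=> vu; elim: j w => [|j IHj] w; first by rewrite in_ball0 addn0 => /eqP->.
rewrite addnS => /in_ballSP[wv | [x xv exw]]; last exact: ball_edge (IHj x xv) exw.
exact: sub_ball (leqnSn _) _ (IHj w wv).
Qed.

Lemma ball1_edge u v : e u v -> v \in ball e 1 u.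
Proof. by apply: (@ball_edge 0); rewrite in_ball0. Qed.

Lemma path_last_ball u p : path e u p -> last u p \in ball e (size p) u.
Proof.
elim: p u => [|y p IHp] u /=; first by rewrite in_ball0.
by case/andP=> /ball1_edge yu /IHp; apply: ball_add yu.
Qed.

Lemma connect_ball u v : connect e u v -> exists2 m, m < #|T| & v \in ball e m u.
Proof.
case/connectP=> p up ->; have [q uq uniq_uq _] := shortenP up.
exists (size q); last exact: path_last_ball.
by have := max_card (mem (u :: q)); rewrite (card_uniqP uniq_uq).
Qed.

Lemma gdist_leqE u v m : connect e u v -> (gdist e u v <= m) = (v \in ball e m u).
Proof.
case/connect_ball=> m0 m0_lt vu.
have has_v : has (fun i => v \in ball e i u) (iota 0 #|T|).
  by apply/hasP; exists m0; rewrite ?mem_iota.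
have d_lt : gdist e u v < #|T| by move: has_v; rewrite has_find size_iota.
have v_d : v \in ball e (gdist e u v) u.
  by have := nth_find 0 has_v; rewrite nth_iota.
apply/idP/idP => [le_dm | vm]; first exact: sub_ball le_dm _ v_d.
rewrite leqNgt; apply/negP => lt_md.
by have := before_find 0 lt_md; rewrite nth_iota ?vm // (ltn_trans lt_md d_lt).
Qed.

Hypothesis e_sym : symmetric e.

Lemma ball_sym m u v : v \in ball e m u -> u \in ball e m v.
Proof.
elim: m v => [|m IHm] v; first by rewrite !in_ball0 eq_sym.
case/in_ballSP=> [/IHm | [x xu exv]]; first exact: sub_ball.
by apply: (ball_add (ball1_edge _)) (IHm x xu); rewrite e_sym.
Qed.

End Balls.

Lemma diam_leqP (T : finType) (e : rel T) m :
  reflect (forall u v, gdist e u v <= m) (diam e <= m).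
Proof.
apply: (iffP idP) => [le_m u v | le_m].
  by apply: leq_trans le_m; apply: leq_trans (leq_bigmax u); apply: leq_bigmax.
by apply/bigmax_leqP => u _; apply/bigmax_leqP => v _.
Qed.

Section ConnectedDistance.
Variables (T : finType) (e : rel T).
Hypotheses (e_sym : symmetric e) (e_irr : irreflexive e) (e_conn : gconnected e).

Let gdist_leq u v m : (gdist e u v <= m) = (v \in ball e m u).
Proof. exact: gdist_leqE. Qed.

Lemma gdist_eq0 u v : (gdist e u v == 0) = (u == v).
Proof. by rewrite -leqn0 gdist_leq in_ball0 eq_sym. Qed.

Lemma gdist0 u : gdist e u u = 0.
Proof. by apply/eqP; rewrite gdist_eq0. Qed.

Lemma gdist_sym u v : gdist e u v = gdist e v u.
Proof.
apply/eqP; rewrite eqn_leq !gdist_leq.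
by apply/andP; split; apply: (ball_sym e_sym); rewrite -gdist_leq.
Qed.

Lemma gdist_triangle u v w : gdist e u w <= gdist e u v + gdist e v w.
Proof. by rewrite gdist_leq; apply: (@ball_add _ _ _ _ _ v); rewrite -gdist_leq. Qed.

Lemma gdist_leq1 u v : (gdist e u v <= 1) = (u == v) || e u v.
Proof.
rewrite gdist_leq in_ballS in_ball0 eq_sym; congr (_ || _).
apply/existsP/idP => [[x] | euv]; last by exists u; rewrite in_ball0 eqxx.
by rewrite in_ball0 => /andP[/eqP->].
Qed.

Lemma gdist_eq1 u v : (gdist e u v == 1) = e u v.
Proof.
have := gdist_leq1 u v; have [->|neq_uv] := eqVneq u v; first by rewrite gdist0 e_irr.
by rewrite -gdist_eq0 in neq_uv; case: (e u v); lia.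
Qed.

Lemma gdist_predS u v m : gdist e u v = m.+1 -> exists2 x, gdist e u x = m & e x v.
Proof.
move=> duv; have /in_ballSP[|[x xu exv]] : v \in ball e m.+1 u.
- by rewrite -gdist_leq duv.
- by rewrite -gdist_leq duv ltnn.
exists x => //; apply/eqP; rewrite eqn_leq gdist_leq xu /=.
by rewrite -ltnS -duv gdist_leq; apply: ball_edge exv; rewrite -gdist_leq.
Qed.

Lemma gdist_intermediate u v m : m <= gdist e u v -> exists w, gdist e u w = m.
Proof.
suff: forall d v, gdist e u v = d -> m <= d -> exists w, gdist e u w = m by apply.
elim=> [|d IHd] {}v duv; first by rewrite leqn0 => /eqP->; exists v.
rewrite leq_eqVlt ltnS => /orP[/eqP-> | le_md]; first by exists v.
by have [x dux _] := gdist_predS duv; apply: IHd dux le_md.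
Qed.

Lemma diam_gt2_path : ~~ (diam e <= 2) ->
  exists a b c d, [/\ e a b, e b c, e c d, gdist e a c = 2 & gdist e a d = 3].
Proof.
move=> diam_gt2; have : ~~ [forall a, forall v, gdist e a v <= 2].
  by apply: contra diam_gt2 => /forallP le2; apply/diam_leqP => a; apply/forallP.
case/forallPn=> a /forallPn[v]; rewrite -ltnNge => lt2.
have [d dad] := gdist_intermediate lt2.
have [c dac ecd] := gdist_predS dad.
have [b dab ebc] := gdist_predS dac.
by exists a, b, c, d; split => //; rewrite -gdist_eq1 dab.
Qed.

Lemma gdist_diam2 x y : diam e <= 2 -> gdist e x y + 2 * (x == y) + e x y = 2.
Proof.
move=> /diam_leqP/(_ x y); have := gdist_eq1 x y; have := gdist_eq0 x y.
by case: (x == y); case: (e x y); case: (gdist e x y) => [|[|[|]]].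
Qed.

End ConnectedDistance.

Section EdgeCount.
Variables (T : finType) (e : rel T).
Hypotheses (e_sym : symmetric e) (e_irr : irreflexive e).

Let edges := [set A : {set T} | [exists x, exists y, e x y && (A == [set x; y])]].

Lemma set2_eq_edge (a b x y : T) : e a b -> x != y ->
  ([set a; b] == [set x; y]) = ((a, b) == (x, y)) || ((a, b) == (y, x)).
Proof.
move=> eab neq_xy; apply/eqP/orP => [ab_xy | [/eqP[-> ->] | /eqP[-> ->]]]; last 2 first.
- by [].
- by rewrite setUC.
have := set21 x y; have := set22 x y; rewrite -ab_xy !inE.
have := set21 a b; have := set22 a b; rewrite ab_xy !inE.
have neq_ab : a != b by apply: contraTneq eab => ->; rewrite e_irr.
by do 4![case/orP=> /eqP ?]; subst; rewrite ?eqxx in neq_ab neq_xy *; auto.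
Qed.

Lemma sum_adj_nedges : \sum_x \sum_y e x y = 2 * nedges e.
Proof.
rewrite pair_big /= -big_mkcond /=.
rewrite (partition_big (fun p : T * T => [set p.1; p.2]) (mem edges)); last first.
  case=> a b /= eab; rewrite inE.
  by apply/existsP; exists a; apply/existsP; exists b; rewrite eab /=.
rewrite /nedges -/edges -sum1_card big_distrr /=; apply: eq_bigr => A.
rewrite inE => /existsP[x /existsP[y /andP[exy /eqP ->]]].
have neq_xy : x != y by apply: contraTneq exy => ->; rewrite e_irr.
rewrite (bigD1 (x, y)) /=; last by rewrite exy eqxx.
rewrite (bigD1 (y, x)) /=; last by rewrite e_sym exy setUC eqxx xpair_eqE eq_sym (negPf neq_xy).
rewrite big1 // => -[a b] /= /andP[/andP[/andP[eab]]].
by rewrite set2_eq_edge // => /orP[] /eqP[-> ->]; rewrite eqxx ?andbF.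
Qed.

End EdgeCount.

Lemma sum_gdist_sq_diam2 (T : finType) (e : rel T) :
  symmetric e -> irreflexive e -> gconnected e -> diam e <= 2 ->
  \sum_x \sum_y gdist e x y ^ 2 + 6 * nedges e + 4 * #|T| = 4 * #|T| ^ 2.
Proof.
move=> e_sym e_irr e_conn le2.
have pair_eq x y : gdist e x y ^ 2 + 3 * e x y + 4 * (x == y) = 4.
  have := gdist_diam2 e_irr e_conn x y le2.
  by case: (x == y); case: (e x y); case: (gdist e x y) => [|[|[|]]].
rewrite -[6]/(3 * 2) -mulnA -(sum_adj_nedges e_sym e_irr) big_distrr /=.
have -> : 4 * #|T| = \sum_(x : T) \sum_(y : T) 4 * (x == y).
  rewrite -sum1_card big_distrr; apply: eq_bigr => x _ /=.
  by rewrite (bigD1 x) //= eqxx big1 ?addn0 // => y /negPf; rewrite eq_sym => ->.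
have -> : 4 * #|T| ^ 2 = \sum_(x : T) \sum_(y : T) 4.
  rewrite (eq_bigr (fun=> #|T| * 4)) => [|x _]; rewrite sum_nat_const //.
  by change #|xpredT| with #|T|; lia.
rewrite -!big_split; apply: eq_bigr => x _ /=.
by rewrite big_distrr -!big_split; apply: eq_bigr => y _; apply: pair_eq.
Qed.

Lemma sum_gdist_sq_leq (T : finType) (e : rel T) m :
  diam e <= m -> \sum_x \sum_y gdist e x y ^ 2 <= #|T| ^ 2 * m ^ 2.
Proof.
move=> /diam_leqP le_m; apply: (@leq_trans (\sum_(x : T) \sum_(y : T) m ^ 2)).
  by apply: leq_sum => x _; apply: leq_sum => y _; rewrite leq_exp2r.
rewrite (eq_bigr (fun=> #|T| * m ^ 2)) => [|x _]; last by rewrite sum_nat_const.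
by rewrite sum_nat_const mulnA.
Qed.

Section Friendship.
Variable k : nat.
Local Notation n := k.*2.+1.
Local Notation F := (friend_rel k).

(* The other outer vertex of the triangle of x; [fmate ord0 = ord0] is junk. *)
Definition fmate (x : 'I_n) : 'I_n := inord (if odd x then x.+1 else x.-1).

Let neq0E (x : 'I_n) : (x != ord0) = (x != 0 :> nat).
Proof. by []. Qed.

Lemma fmate_val x : x != ord0 -> fmate x = (if odd x then x.+1 else x.-1) :> nat.
Proof. by rewrite neq0E => x_neq0; rewrite inordK; have := ltn_ord x; case: ifP; lia. Qed.

Lemma fmate_neq0 x : x != ord0 -> fmate x != ord0.
Proof.
by move=> x_neq0; rewrite neq0E fmate_val //; move: x_neq0; rewrite neq0E; case: ifP; lia.
Qed.

Lemma fmateK x : x != ord0 -> fmate (fmate x) = x.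
Proof.
move=> x_neq0; apply: val_inj; rewrite /= fmate_val ?fmate_neq0 // fmate_val //.
move: x_neq0; rewrite neq0E; case: x => -[|y] //= _ _.
by case: (boolP (odd y)) => odd_y /=; rewrite odd_y.
Qed.

Lemma friend_sym : symmetric F.
Proof.
move=> x y; rewrite /friend_rel eq_sym; congr (_ && _).
by rewrite orbA (orbC (x == 0 :> nat)) -orbA (eq_sym (_./2)).
Qed.

Lemma friend_irr : irreflexive F.
Proof. by move=> x; rewrite /friend_rel eqxx. Qed.

Lemma friend_rel0 x : F x ord0 = (x != ord0).
Proof. by rewrite /friend_rel eqxx orbT andbT. Qed.

Lemma friend_relE x y : y != ord0 -> F x y = (x == ord0) || (x == fmate y).
Proof.
move=> y_neq0; rewrite /friend_rel -!(inj_eq val_inj) /= fmate_val //.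
move: y_neq0; rewrite neq0E; have := ltn_ord x; have := ltn_ord y.
by case: ifP; case: eqP; case: eqP; case: eqP; lia.
Qed.

Lemma friend_connected : gconnected F.
Proof.
have to0 x : connect F x ord0.
  by have [->|x_neq0] := eqVneq x ord0; rewrite ?connect0 // connect1 // friend_rel0.
by move=> x y; apply: connect_trans (to0 x) _; rewrite (sym_connect_sym friend_sym).
Qed.

End Friendship.

Section DistanceSpectra.
Local Open Scope ring_scope.
Local Open Scope sesquilinear_scope.

Lemma char_poly_conjmx n (P A : 'M[algC]_n) : P \in unitmx ->
  char_poly (invmx P *m A *m P) = char_poly A.
Proof.
move=> P_unit; rewrite /char_poly /char_poly_mx.
have -> : 'X%:M - map_mx polyC (invmx P *m A *m P) =
    map_mx polyC (invmx P) *m ('X%:M - map_mx polyC A) *m map_mx polyC P.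
  rewrite mulmxBr mulmxBl !map_mxM; congr (_ - _).
  by rewrite mul_mx_scalar -scalemxAl -map_mxM mulVmx // map_mx1 scalemx1.
rewrite !det_mulmx !det_map_mx mulrC mulrA -rmorphM -det_mulmx mulmxV //.
by rewrite det1 rmorph1 mul1r.
Qed.

Section RealSymmetric.
Variables (n : nat) (A : 'M[algC]_n).
Hypotheses (A_sym : A \is symmetricmx) (A_real : A \is a realmx).

Let P := spectralmx A.
Let X := spectral_diag A.

Let A_herm : A \is hermsymmx := realsym_hermsym A_sym A_real.

Let A_spectral : A = invmx P *m diag_mx X *m P.
Proof. exact/orthomx_spectralP/hermitian_normalmx. Qed.

Lemma char_poly_realsym : char_poly A = \prod_i ('X - (X 0 i)%:P).
Proof.
rewrite [in LHS]A_spectral char_poly_conjmx ?spectral_unit //.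
rewrite char_poly_trig ?diag_mx_is_trig //.
by apply: eq_bigr => i _; rewrite mxE eqxx mulr1n.
Qed.

Lemma eigenvalue_realsymE a : eigenvalue A a = [exists i, a == X 0 i].
Proof.
rewrite eigenvalue_root_char char_poly_realsym.
rewrite -(big_map (fun i => X 0 i) xpredT (fun b => 'X - b%:P)) root_prod_XsubC.
by apply/mapP/existsP => [[i _ ->] | [i /eqP->]]; exists i; rewrite ?mem_index_enum.
Qed.

Lemma realsym_eigenvalue_real a : eigenvalue A a -> a \is Num.real.
Proof.
rewrite eigenvalue_realsymE => /existsP[i /eqP->].
exact: mxOverP (hermitian_spectral_diag_real A_herm) _ _.
Qed.

Lemma mxtrace_sqr_realsym : \tr (A *m A) = \sum_i X 0 i ^+ 2.
Proof.
rewrite A_spectral !mulmxA mulmxK ?spectral_unit // -!mulmxA mxtrace_mulC.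
rewrite !mulmxA mulmxK ?spectral_unit // /mxtrace.
by apply: eq_bigr => i _; rewrite mul_diag_mx !mxE eqxx mulr1n expr2.
Qed.

Lemma dotmx_realsym_ge c w : (forall a, eigenvalue A a -> c <= a) ->
  c * dotmx w w <= dotmx (w *m A) w.
Proof.
move=> ge_c; have X_ge i : c <= X 0 i.
  by apply: ge_c; rewrite eigenvalue_realsymE; apply/existsP; exists i.
pose z := w *m P^t*.
have Pw : P *m w^t* = z^t* by rewrite /z trmx_mul map_mxM trmxCK.
have -> : dotmx (w *m A) w = (z *m diag_mx X *m z^t*) 0 0.
  by rewrite dotmxE A_spectral invmx_unitary ?spectral_unitarymx // !mulmxA -/z -!mulmxA Pw.
have -> : dotmx w w = (z *m z^t*) 0 0.
  by rewrite dotmxE -{1}(mulmxKtV w (spectral_unitarymx A)) // -/z -mulmxA Pw.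
clearbody z; rewrite mul_mx_diag !mxE mulr_sumr -subr_ge0 -sumrB sumr_ge0 // => i _.
rewrite !mxE mulrAC [c * _]mulrC -mulrBr.
by rewrite mulr_ge0 ?subr_ge0 // -normCK exprn_ge0.
Qed.

End RealSymmetric.

Lemma mxtrace_sqr_char_poly n (A B : 'M[algC]_n) :
  A \is symmetricmx -> A \is a realmx -> B \is symmetricmx -> B \is a realmx ->
  char_poly A = char_poly B -> \tr (A *m A) = \tr (B *m B).
Proof.
move=> A_sym A_real B_sym B_real eq_AB.
rewrite !mxtrace_sqr_realsym // !char_poly_realsym // in eq_AB *.
rewrite -(big_map (fun i => spectral_diag A 0 i) xpredT (fun a => a ^+ 2)).
rewrite -(big_map (fun i => spectral_diag B 0 i) xpredT (fun a => a ^+ 2)).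
by apply: perm_big; apply: prod_XsubC_eq; rewrite !big_map.
Qed.

Lemma sum_delta_mulr m (F : 'I_m -> algC) k : \sum_j F j * (j == k)%:R = F k.
Proof. by rewrite (bigD1 k) //= eqxx mulr1 big1 ?addr0 // => j /negPf->; rewrite mulr0. Qed.

Definition delta_comb m (s : seq (algC * 'I_m)) : 'rV[algC]_m :=
  \sum_(q <- s) q.1 *: delta_mx 0 q.2.

Lemma dotmx_delta_comb m (M : 'M[algC]_m) (s : seq (algC * 'I_m)) :
  dotmx (delta_comb s *m M) (delta_comb s) =
  \sum_(q <- s) \sum_(r <- s) q.1 * r.1^* * M q.2 r.2.
Proof.
set w := delta_comb s; have wE i j : w i j = \sum_(q <- s) q.1 * (j == q.2)%:R.
  by rewrite /w summxE; apply: eq_bigr => q _; rewrite !mxE ord1 eqxx.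
rewrite dotmxE !mxE [RHS]exchange_big /=.
under eq_bigr => j _ do rewrite !mxE wE rmorph_sum mulr_sumr.
rewrite exchange_big /=; apply: eq_bigr => r _.
under eq_bigr => j _ do rewrite rmorphM rmorph_nat mulrA.
rewrite sum_delta_mulr.
rewrite mulr_suml; under [LHS]eq_bigr => j _ do rewrite wE !mulr_suml.
rewrite exchange_big /=; apply: eq_bigr => q _.
under eq_bigr => j _ do rewrite -!mulrA mulrCA mulrC.
by rewrite sum_delta_mulr mulrA mulrAC.
Qed.

Section DistanceMatrix.
Variables (m : nat) (e : rel 'I_m).

(* The distance matrix over algC, where the spectral theorem is available. *)
Definition cdistmx : 'M[algC]_m := map_mx intr (distmx e).

Lemma cdistmxE x y : cdistmx x y = (gdist e x y)%:R.
Proof. by rewrite !mxE. Qed.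

Lemma cdistmx_real : cdistmx \is a realmx.
Proof. by apply/mxOverP => x y; rewrite cdistmxE realn. Qed.

Hypotheses (e_sym : symmetric e) (e_irr : irreflexive e) (e_conn : gconnected e).

Lemma cdistmx_sym : cdistmx \is symmetricmx.
Proof.
apply/is_hermitianmxP; rewrite expr0 scale1r; apply/matrixP => x y.
by rewrite !mxE (gdist_sym e_sym e_conn).
Qed.

Lemma mxtrace_sqr_cdistmx : \tr (cdistmx *m cdistmx) = (\sum_x \sum_y gdist e x y ^ 2)%:R.
Proof.
rewrite natr_sum; apply: eq_bigr => x _; rewrite mxE natr_sum; apply: eq_bigr => y _.
by rewrite !cdistmxE (gdist_sym e_sym e_conn y x) natrX expr2.
Qed.

Lemma cdistmx_form_diam_le2 :
  (forall w, -3 * dotmx w w <= dotmx (w *m cdistmx) w) -> (diam e <= 2)%N.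
Proof.
move=> form_ge; apply/negPn/negP.
case/(diam_gt2_path e_irr e_conn) => [a [b [c [d [eab ebc ecd dac dad]]]]].
(* Rayleigh quotient -198/58 < -3 on the path a - b - c - d. *)
pose s : seq (algC * 'I_m) := [:: (5, a); (2, b); (-2, c); (-5, d)].
have := form_ge (delta_comb s).
have [dab dbc dcd] : [/\ gdist e a b = 1, gdist e b c = 1 & gdist e c d = 1]%N.
  by split; apply/eqP; rewrite gdist_eq1.
have dbd : gdist e b d = 2%N.
  have := gdist_triangle e_conn a b d; have := gdist_triangle e_conn b c d.
  by rewrite dad dab dbc dcd; lia.
have := dotmx_delta_comb 1%:M s; rewrite mulmx1 => ->; rewrite dotmx_delta_comb.
rewrite /s !big_cons !big_nil /= !cdistmxE !mxE -!(gdist_eq0 e_conn) !(gdist0 e_conn).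
rewrite !(gdist_sym e_sym e_conn _ a) (gdist_sym e_sym e_conn c b).
rewrite (gdist_sym e_sym e_conn d b) (gdist_sym e_sym e_conn d c).
rewrite dab dac dad dbc dbd dcd /= !conjC_nat !rmorphN !rmorph_nat.
set L := (X in X <= _); set R := (X in _ <= X).
have -> : L = - 174%:R by rewrite /L; ring.
have -> : R = - 198%:R by rewrite /R; ring.
by rewrite lerN2 ler_nat.
Qed.

End DistanceMatrix.

Section FriendshipSpectrum.
Variable k : nat.
Local Notation n := k.*2.+1.
Local Notation F := (friend_rel k).

Lemma diam_friend_le2 : (diam F <= 2)%N.
Proof.
apply/diam_leqP => x y; apply: (leq_trans (gdist_triangle (@friend_connected k) x ord0 y)).
rewrite -[2%N]/(1 + 1)%N leq_add // (gdist_leq1 (@friend_connected k)).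
  by rewrite friend_rel0 orbN.
by rewrite friend_sym friend_rel0 eq_sym orbN.
Qed.

Lemma friend_cdistmxE x y : cdistmx F x y = 2 - 2 * (x == y)%:R - (F x y)%:R.
Proof.
have := gdist_diam2 (@friend_irr k) (@friend_connected k) x y diam_friend_le2.
by move/(congr1 (fun m => m%:R : algC)); rewrite /= !natrD cdistmxE => {1}<-; ring.
Qed.

Lemma friend_sum_adj0 (f : 'I_n -> algC) : \sum_x f x * (F x ord0)%:R = \sum_x f x - f ord0.
Proof.
rewrite [in RHS](bigD1 ord0) //= [RHS]addrC addKr (bigD1 ord0) //= mulr0 add0r.
by apply: eq_bigr => x x_neq0; rewrite friend_rel0 x_neq0 mulr1.
Qed.

Lemma friend_sum_adj (f : 'I_n -> algC) y : y != ord0 ->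
  \sum_x f x * (F x y)%:R = f ord0 + f (fmate y).
Proof.
move=> y_neq0; rewrite (bigD1 ord0) //= friend_relE // eqxx mulr1.
rewrite (bigD1 (fmate y)) ?fmate_neq0 //= friend_relE // eqxx orbT mulr1.
rewrite big1 ?addr0 // => x /andP[x_neq0 x_neq_mate].
by rewrite friend_relE // (negPf x_neq0) (negPf x_neq_mate) mulr0.
Qed.

Lemma friend_mulmx_cdistmx (u : 'rV[algC]_n) y : (u *m cdistmx F) 0 y =
  2 * \sum_x u 0 x - 2 * u 0 y - \sum_x u 0 x * (F x y)%:R.
Proof.
rewrite mxE (eq_bigr (fun x => 2 * u 0 x - 2 * (u 0 x * (x == y)%:R) - u 0 x * (F x y)%:R)).
  by rewrite !sumrB -!mulr_sumr sum_delta_mulr.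
by move=> x _; rewrite friend_cdistmxE; ring.
Qed.

Section Eigenvector.
Variables (lam : algC) (u : 'rV[algC]_n).
Hypothesis u_eig : u *m cdistmx F = lam *: u.
Local Notation S := (\sum_x u 0 x).

Lemma friend_eigen0 : S - u 0 ord0 = lam * u 0 ord0.
Proof.
have := congr1 (fun v : 'rV_n => v 0 ord0) u_eig.
by rewrite /= friend_mulmx_cdistmx friend_sum_adj0 mxE => <-; ring.
Qed.

Lemma friend_eigen y : y != ord0 ->
  2 * S - 2 * u 0 y - (u 0 ord0 + u 0 (fmate y)) = lam * u 0 y.
Proof.
move=> y_neq0; have := congr1 (fun v : 'rV_n => v 0 y) u_eig.
by rewrite /= friend_mulmx_cdistmx friend_sum_adj // mxE.
Qed.

Lemma friend_eigen_mate y : y != ord0 -> lam != -1 -> u 0 (fmate y) = u 0 y.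
Proof.
move=> y_neq0 lam_neqN1; apply/eqP; rewrite -subr_eq0.
have : (lam + 1) * (u 0 (fmate y) - u 0 y) = 0.
  have := friend_eigen y_neq0; have := friend_eigen (fmate_neq0 y_neq0).
  by rewrite fmateK // => e1 e2; rewrite mulrDl mulrBr -e1 -e2 mul1r; ring.
by move/eqP; rewrite mulf_eq0 [lam + 1 == 0]addr_eq0 (negPf lam_neqN1).
Qed.

Lemma friend_eigen_const y : y != ord0 -> lam != -1 ->
  (lam + 3) * u 0 y = 2 * S - u 0 ord0.
Proof.
move=> y_neq0 lam_neqN1; have := friend_eigen y_neq0.
by rewrite friend_eigen_mate // [(lam + 3) * _]mulrDl => <-; ring.
Qed.

Lemma friend_eigen_quadratic : u != 0 -> lam != -1 -> lam + 3 != 0 ->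
  lam * (lam + 3) = (k.*2)%:R * (2 * lam + 1).
Proof.
move=> u_neq0 lam_neqN1 lam3_neq0; pose K : algC := (k.*2)%:R.
pose a := (2 * S - u 0 ord0) / (lam + 3).
have ua y : y != ord0 -> u 0 y = a.
  by move=> y_neq0; rewrite /a -(friend_eigen_const y_neq0) // [(lam + 3) * _]mulrC mulfK.
have S_eq : S = u 0 ord0 + K * a.
  rewrite (bigD1 ord0) //= (eq_bigr (fun=> a)) ?sumr_const => [|y /ua //].
  by rewrite cardC1 card_ord /K mulr_natl.
have u0_eq : u 0 ord0 = (lam + 3) * a - 2 * K * a.
  by rewrite [(lam + 3) * a]mulrC divfK // S_eq; ring.
have : a * (lam * (lam + 3) - K * (2 * lam + 1)) = lam * u 0 ord0 - K * a.
  by rewrite u0_eq; ring.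
have -> : K * a = lam * u 0 ord0 by rewrite -friend_eigen0 S_eq; ring.
rewrite subrr => /eqP; rewrite mulf_eq0 subr_eq0 => /orP[/eqP a0 | /eqP //].
case/negP: u_neq0; apply/eqP/rowP => y; rewrite mxE.
have [-> | y_neq0] := eqVneq y ord0; last by rewrite ua.
by rewrite u0_eq a0 !mulr0 subrr.
Qed.

End Eigenvector.

Lemma friend_eigenvalue_ge lam : eigenvalue (cdistmx F) lam -> -3 <= lam.
Proof.
move=> eig_lam; have lam_real : lam \is Num.real.
  exact: realsym_eigenvalue_real (cdistmx_sym (@friend_sym k) (@friend_connected k))
    (cdistmx_real F) _ eig_lam.
move/eigenvalueP: eig_lam => [u u_eig u_neq0].
rewrite real_leNgt ?rpredN ?realn //; apply/negP => lam_lt.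
have lam3_lt0 : lam + 3 < 0 by rewrite -(opprK 3) subr_lt0.
have lam_neqN1 : lam != -1 by apply: contraTneq lam_lt => ->; rewrite ltrN2 ltrn1.
have := friend_eigen_quadratic u_eig u_neq0 lam_neqN1 (ltr0_neq0 lam3_lt0).
have -> : 2 * lam + 1 = 2 * (lam + 3) - 5 by ring.
move=> lam_quad; have : 0 < lam * (lam + 3).
  by rewrite nmulr_rgt0 ?lam3_lt0 ?(lt_trans lam_lt) ?oppr_lt0.
rewrite lam_quad => quad_gt0.
have : (k.*2)%:R * (2 * (lam + 3) - 5) <= 0.
  by rewrite mulr_ge0_le0 // subr_le0 ltW // (lt_le_trans _ (ler0n _ 5)) // pmulr_rlt0.
by move/(lt_le_trans quad_gt0); rewrite ltxx.
Qed.

Lemma nedges_friend : nedges F = (3 * k)%N.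
Proof.
suff : (\sum_x \sum_y F x y = 6 * k)%N.
  by rewrite (sum_adj_nedges (@friend_sym k) (@friend_irr k)); lia.
apply/eqP; rewrite -(eqr_nat algC) natr_sum.
under eq_bigr => x _ do rewrite natr_sum.
rewrite exchange_big (bigD1 ord0) //=.
under eq_bigr => x _ do rewrite -[X in X%:R]mul1n natrM.
rewrite friend_sum_adj0 [X in _ + X](eq_bigr (fun=> 2)) => [|y y_neq0]; last first.
  by have := friend_sum_adj (fun=> 1) y_neq0; rewrite (eq_bigr _ (fun x _ => mul1r _)) => ->.
by rewrite !sumr_const cardC1 card_ord mulrSr addrK -[2 *+ _]mulrnA -natrD eqr_nat; lia.
Qed.

End FriendshipSpectrum.

End DistanceSpectra.

Unset Implicit Arguments.
Theorem lemma2p10 (k : nat) (e : rel 'I_(k.*2.+1)) :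
  2 <= k ->
  symmetric e -> irreflexive e -> gconnected e ->
  char_poly (distmx e) = char_poly (distmx (friend_rel k)) ->
  diam e = 2 /\ nedges e = nedges (friend_rel k) /\ nedges (friend_rel k) = 3 * k.
Proof.
move=> k_ge2 e_sym e_irr e_conn eq_char.
have F_sym := @friend_sym k; have F_irr := @friend_irr k; have F_conn := @friend_connected k.
have eq_charC : char_poly (cdistmx e) = char_poly (cdistmx (friend_rel k)).
  by rewrite /cdistmx -!map_char_poly eq_char.
have eig_ge lam : eigenvalue (cdistmx e) lam -> (-3 <= lam)%R.
  by rewrite !eigenvalue_root_char eq_charC -eigenvalue_root_char; apply: friend_eigenvalue_ge.
have diam_le2 : diam e <= 2.
  apply: (cdistmx_form_diam_le2 e_sym e_irr e_conn) => w.
  exact: (dotmx_realsym_ge (cdistmx_sym e_sym e_conn) (cdistmx_real e) w eig_ge).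
have eq_sq : \sum_x \sum_y gdist e x y ^ 2 = \sum_x \sum_y gdist (friend_rel k) x y ^ 2.
  apply/eqP; rewrite -(eqr_nat algC) -mxtrace_sqr_cdistmx // -mxtrace_sqr_cdistmx //.
  by rewrite (mxtrace_sqr_char_poly _ _ _ _ eq_charC) ?cdistmx_sym ?cdistmx_real.
have := sum_gdist_sq_diam2 e_sym e_irr e_conn diam_le2.
have := sum_gdist_sq_diam2 F_sym F_irr F_conn (diam_friend_le2 k).
rewrite -eq_sq nedges_friend card_ord => sqF sqE.
have diam_gt1 : ~~ (diam e <= 1).
  apply/negP => /sum_gdist_sq_leq; rewrite card_ord; nia.
by split; [lia | split; lia].
Qed.
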